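(* Let $r$ be a nonnegative integer. For real $x$ with $|x|<1$, $$\sum_{m=0}^\infty\zeta^\star(r+2,\{2\}^m)x^{2m}=\sum_{k=1}^\infty\frac{1}{k^{r+2}}\frac{\Gamma(k+x)\Gamma(k-x)}{\Gamma(k)^2}.$$
   Context: $\zeta^\star(\alpha_1,\ldots,\alpha_r)=\sum_{1\le k_1\le\cdots\le k_r}k_1^{-\alpha_1}\cdots k_r^{-\alpha_r}$ for positive integers $\alpha_i$ with $\alpha_1\ge2$ in the nontrivial-first-entry convention used here (the argument tuple $(r+2,\{2\}^m)$ consists of $r+2$ followed by $m$ copies of $2$; for $m=0$ it is $\zeta(r+2)$). $\Gamma$ is the gamma function. *)

From Stdlib Require Import Reals List.
From Coquelicot Require Import Coquelicot.
Open Scope R_scope.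

(* Euler's Gamma function, Gamma(s) = int_0^oo t^(s-1) e^(-t) dt
   (used only at arguments s > 0, where the improper integral converges). *)
Definition Gamma (s : R) : R :=
  RInt_gen (fun t => Rpower t (s - 1) * exp (- t))
           (at_right 0) (Rbar_locally p_infty).

(* zs_tail [a1; ...; ar] n
     = sum_{n <= k1 <= k2 <= ... <= kr} k1^{-a1} ... kr^{-ar},
   written as the literal nested series (all terms are nonnegative). *)
Fixpoint zs_tail (l : list nat) (n : nat) : R :=
  match l with
  | nil => 1
  | a :: l' => Series (fun i => / (INR (n + i)) ^ a * zs_tail l' (n + i)%nat)
  end.

Definition zeta_star (l : list nat) : R := zs_tail l 1.

From Stdlib Require Import Reals List Lra Lia.
From Coquelicot Require Import Coquelicot.
Open Scope R_scope.

(* Let h_m(n) be the tail of zeta*(2,...,2) (m twos) summed over n <= k_1 <= ... <= k_m.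
   Splitting off the terms with k_1 = n gives h_(m+1)(n) = h_m(n)/n^2 + h_(m+1)(n+1), so the
   generating function S(n) = sum_m h_m(n) y^m satisfies S(n+1) = (1 - y/n^2) S(n).  By
   Gamma(s+1) = s Gamma(s), the ratio G(n) = Gamma(n+x) Gamma(n-x) / Gamma(n)^2 satisfies the
   same recursion with y = x^2, and log-convexity of Gamma gives 1 <= G(n) <= n/(n-1).
   Comparing partial sums yields 1 <= S(n) <= G(n); hence S/G is a constant at most 1, and it
   is 1 because G(n) -> 1.  Weighting by k^-(r+2) and exchanging the two sums of nonnegative
   terms gives the theorem. *)

(** * Series of nonnegative terms *)

Lemma is_series_sum_f_R0 (a : nat -> R) (l : R) :
  is_series a l <-> is_lim_seq (sum_f_R0 a) l.
Proof. rewrite is_series_Reals, is_lim_seq_Reals; reflexivity. Qed.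

Lemma sum_f_R0_le_is_series (a : nat -> R) (l : R) :
  (forall n, 0 <= a n) -> is_series a l -> forall N, sum_f_R0 a N <= l.
Proof.
  intros Ha Hl. apply is_lim_seq_incr_compare; [now apply is_series_sum_f_R0|].
  intro n; simpl; specialize (Ha (S n)); lra.
Qed.

Lemma is_series_ge0 (a : nat -> R) (l : R) :
  (forall n, 0 <= a n) -> is_series a l -> 0 <= l.
Proof.
  intros Ha Hl. apply Rle_trans with (sum_f_R0 a 0); [apply Ha|].
  now apply sum_f_R0_le_is_series.
Qed.

Lemma is_series_le (a b : nat -> R) (la lb : R) :
  (forall n, a n <= b n) -> is_series a la -> is_series b lb -> la <= lb.
Proof.
  intros Hab Ha Hb. rewrite is_series_sum_f_R0 in Ha, Hb.
  exact (is_lim_seq_le _ _ la lb (fun N => sum_Rle a b N (fun n _ => Hab n)) Ha Hb).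
Qed.

Lemma is_series_bounded_ge0 (a : nat -> R) (M : R) :
  (forall n, 0 <= a n) -> (forall N, sum_f_R0 a N <= M) ->
  exists l, is_series a l /\ l <= M.
Proof.
  intros Ha HM.
  destruct (ex_finite_lim_seq_incr (sum_f_R0 a) M) as [l Hl]; auto.
  { intro n; simpl; specialize (Ha (S n)); lra. }
  exists l; split; [now apply is_series_sum_f_R0|].
  exact (is_lim_seq_le _ (fun _ => M) l M HM Hl (is_lim_seq_const M)).
Qed.

Lemma is_series_dominated (a b : nat -> R) (lb : R) :
  (forall n, 0 <= a n <= b n) -> is_series b lb ->
  exists la, is_series a la /\ la <= lb.
Proof.
  intros Hab Hb. apply is_series_bounded_ge0; [intro n; apply Hab|].
  intro N. apply Rle_trans with (sum_f_R0 b N).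
  - apply sum_Rle; intros; apply Hab.
  - apply sum_f_R0_le_is_series; auto. intro n; specialize (Hab n); lra.
Qed.

Lemma is_series_sum_f_R0_rows (a : nat -> nat -> R) (A : nat -> R) (M : nat) :
  (forall m, is_series (a m) (A m)) ->
  is_series (fun k => sum_f_R0 (fun m => a m k) M) (sum_f_R0 A M).
Proof.
  intro HA; induction M as [|M IH]; [apply HA|].
  exact (is_series_plus _ _ _ _ IH (HA (S M))).
Qed.

Lemma is_series_telescoping (v : nat -> R) (l : R) :
  is_lim_seq v l -> is_series (fun i => v i - v (S i)) (v O - l).
Proof.
  intro Hv. apply is_series_sum_f_R0.
  apply is_lim_seq_ext with (fun N => v O - v (S N)).
  { intro N; induction N as [|N IH]; simpl in *; lra. }
  apply (is_lim_seq_incr_1 (fun N => v O - v N)).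
  apply (is_lim_seq_minus' _ _ (v O) l); [apply is_lim_seq_const | exact Hv].
Qed.

Lemma is_series_term_le (a : nat -> R) (l : R) :
  (forall n, 0 <= a n) -> is_series a l -> forall n, a n <= l.
Proof.
  intros Ha Hl n. apply Rle_trans with (sum_f_R0 a n); [|now apply sum_f_R0_le_is_series].
  destruct n as [|n]; simpl; [lra|].
  assert (H := cond_pos_sum a n Ha). lra.
Qed.

Lemma is_series_swap_ge0 (a : nat -> nat -> R) (B : nat -> R) (L : R) :
  (forall m k, 0 <= a m k) ->
  (forall k, is_series (fun m => a m k) (B k)) -> is_series B L ->
  is_series (fun m => Series (a m)) L.
Proof.
  intros Ha HB HL.
  assert (HB0 : forall k, 0 <= B k).
  { intro k. exact (is_series_ge0 _ _ (fun m => Ha m k) (HB k)). }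
  assert (HA : forall m, is_series (a m) (Series (a m))).
  { intro m. destruct (is_series_dominated (a m) B L) as [l [Hl _]]; auto.
    - intro k. split; [apply Ha|]. exact (is_series_term_le _ _ (fun m' => Ha m' k) (HB k) m).
    - now rewrite (is_series_unique _ _ Hl). }
  assert (HA0 : forall m, 0 <= Series (a m)).
  { intro m. exact (is_series_ge0 _ _ (Ha m) (HA m)). }
  destruct (is_series_bounded_ge0 (fun m => Series (a m)) L HA0) as [L' [HL' HL'L]].
  { intro M. refine (is_series_le _ _ _ _ _ (is_series_sum_f_R0_rows a _ M HA) HL).
    intro k. exact (sum_f_R0_le_is_series _ _ (fun m => Ha m k) (HB k) M). }
  destruct (is_series_bounded_ge0 B L' HB0) as [L2 [HL2 HL2L']].
  { intro K.
    refine (is_series_le _ _ _ _ _ (is_series_sum_f_R0_rows (fun k m => a m k) B K HB) HL').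
    intro m. exact (sum_f_R0_le_is_series _ _ (Ha m) (HA m) K). }
  assert (L2 = L) by (rewrite <- (is_series_unique _ _ HL2); now apply is_series_unique).
  replace L with L' by lra. exact HL'.
Qed.

Lemma is_series_shift_1 (a : nat -> R) (l : R) :
  is_series a l -> is_series (fun k => a (S k)) (l - a O).
Proof.
  intro Hl. apply is_series_incr_1. change (is_series a (l - a O + a O)).
  now replace (l - a O + a O) with l by ring.
Qed.

(** * Tails of zeta-star values with all arguments equal to 2 *)

Definition inv_sq (k : nat) : R := / INR k ^ 2.

Definition zs_twos (m n : nat) : R := zs_tail (repeat 2%nat m) n.

Lemma INR_ge1 (k : nat) : (1 <= k)%nat -> 1 <= INR k.
Proof. intro Hk. exact (le_INR 1 k Hk). Qed.

Lemma inv_sq_gt0 (k : nat) : (1 <= k)%nat -> 0 < inv_sq k.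
Proof.
  intro Hk. assert (H := INR_ge1 k Hk).
  apply Rinv_0_lt_compat, pow_lt. lra.
Qed.

Lemma is_lim_seq_inv_INR_shift (n : nat) : is_lim_seq (fun i => / INR (n + i)) 0.
Proof.
  replace (Finite 0) with (Rbar_inv p_infty) by reflexivity.
  apply is_lim_seq_inv; [|discriminate].
  apply (is_lim_seq_ext (fun i => INR (i + n))); [intro i; f_equal; lia|].
  apply (is_lim_seq_incr_n INR n), is_lim_seq_INR.
Qed.

Lemma inv_sq_le_telescoping (k : nat) : (1 <= k)%nat ->
  inv_sq k <= 2 * (/ INR k - / INR (S k)).
Proof.
  intro Hk. assert (H := INR_ge1 k Hk). unfold inv_sq. rewrite S_INR.
  replace (/ INR k - / (INR k + 1)) with (/ (INR k * (INR k + 1))) by (field; lra).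
  replace (2 * / (INR k * (INR k + 1))) with (/ (INR k * ((INR k + 1) / 2))) by (field; lra).
  apply Rinv_le_contravar; [nra|]. simpl; nra.
Qed.

Lemma inv_pow_le_inv_sq (r k : nat) : (1 <= k)%nat -> 0 < / INR k ^ (r + 2) <= inv_sq k.
Proof.
  intro Hk. assert (H := INR_ge1 k Hk).
  assert (0 < INR k ^ 2) by (apply pow_lt; lra).
  split; [apply Rinv_0_lt_compat, pow_lt; lra|].
  apply Rinv_le_contravar; [assumption|]. rewrite pow_add, Rmult_comm.
  assert (1 <= INR k ^ r) by now apply pow_R1_Rle.
  nra.
Qed.

Lemma is_series_inv_sq (n : nat) : (1 <= n)%nat ->
  exists l, is_series (fun i => inv_sq (n + i)) l /\ l <= 2.
Proof.
  intro Hn.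
  assert (Htel := is_series_telescoping _ _ (is_lim_seq_inv_INR_shift n)).
  apply (is_series_scal_l 2) in Htel.
  edestruct (is_series_dominated (fun i => inv_sq (n + i))) as [l [Hl Hl2]]; [|exact Htel|].
  - intro i. split; [left; apply inv_sq_gt0; lia|].
    replace (n + S i)%nat with (S (n + i)) by lia. apply inv_sq_le_telescoping; lia.
  - exists l; split; auto.
    change (l <= 2 * (/ INR (n + 0) - 0)) in Hl2. rewrite Nat.add_0_r in Hl2.
    assert (H := INR_ge1 n Hn).
    assert (/ INR n <= 1) by (rewrite <- Rinv_1; apply Rinv_le_contravar; lra).
    lra.
Qed.

Lemma zs_twos_0 (n : nat) : zs_twos 0 n = 1.
Proof. reflexivity. Qed.

Lemma zs_twos_S (m n : nat) :
  zs_twos (S m) n = Series (fun i => inv_sq (n + i) * zs_twos m (n + i)).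
Proof. reflexivity. Qed.

Lemma is_series_zs_twos_S_of_bound (m n : nat) (M : R) : (1 <= n)%nat ->
  (forall k, (1 <= k)%nat -> 0 <= zs_twos m k <= M) ->
  is_series (fun i => inv_sq (n + i) * zs_twos m (n + i)) (zs_twos (S m) n) /\
  0 <= zs_twos (S m) n <= 2 * M.
Proof.
  intros Hn Hb.
  destruct (is_series_inv_sq n Hn) as [l [Hl Hl2]].
  assert (Hdom : forall i, 0 <= inv_sq (n + i) * zs_twos m (n + i) <= inv_sq (n + i) * M).
  { intro i. assert (0 < inv_sq (n + i)) by (apply inv_sq_gt0; lia).
    destruct (Hb (n + i)%nat ltac:(lia)). split; nra. }
  destruct (is_series_dominated _ _ _ Hdom (is_series_scal_r M _ _ Hl)) as [l' [Hl' Hl'2]].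
  rewrite zs_twos_S, (is_series_unique _ _ Hl').
  assert (0 <= l') by exact (is_series_ge0 _ _ (fun i => proj1 (Hdom i)) Hl').
  assert (0 <= M) by (destruct (Hb n Hn); lra).
  repeat split; auto. nra.
Qed.

Lemma zs_twos_bounds (m n : nat) : (1 <= n)%nat -> 0 <= zs_twos m n <= 2 ^ m.
Proof.
  revert n; induction m as [|m IH]; intros n Hn.
  - rewrite zs_twos_0; simpl; lra.
  - exact (proj2 (is_series_zs_twos_S_of_bound m n _ Hn IH)).
Qed.

Lemma is_series_zs_twos_S (m n : nat) : (1 <= n)%nat ->
  is_series (fun i => inv_sq (n + i) * zs_twos m (n + i)) (zs_twos (S m) n).
Proof.
  intro Hn. exact (proj1 (is_series_zs_twos_S_of_bound m n _ Hn (zs_twos_bounds m))).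
Qed.

Lemma zs_twos_ge0 (m n : nat) : (1 <= n)%nat -> 0 <= zs_twos m n.
Proof. intro Hn. apply (zs_twos_bounds m n Hn). Qed.

Lemma zs_twos_S_shift (m n : nat) : (1 <= n)%nat ->
  zs_twos (S m) n = inv_sq n * zs_twos m n + zs_twos (S m) (S n).
Proof.
  intro Hn. rewrite zs_twos_S, Series_incr_1.
  2:{ eexists. now apply is_series_zs_twos_S. }
  rewrite Nat.add_0_r. f_equal. rewrite zs_twos_S.
  apply Series_ext. intro i. now replace (n + S i)%nat with (S n + i)%nat by lia.
Qed.

Lemma sum_zs_twos_S (y : R) (M n : nat) :
  sum_f_R0 (fun m => zs_twos m n * y ^ m) (S M) =
  1 + y * sum_f_R0 (fun m => zs_twos (S m) n * y ^ m) M.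
Proof.
  rewrite decomp_sum by lia. simpl pred. rewrite zs_twos_0, scal_sum.
  simpl; f_equal; [ring|]. apply sum_eq; intros; ring.
Qed.

(** * The generating function of the tails *)

(* [G] will be the ratio of Gamma values; only its recursion, its lower bound and its limit
   are used. *)
Section TwosGeneratingFunction.

Variable y : R.
Hypothesis y_ge0 : 0 <= y.
Variable G : nat -> R.
Hypothesis G_S : forall n, (1 <= n)%nat -> G (S n) = G n * (1 - y * inv_sq n).
Hypothesis G_ge1 : forall n, (1 <= n)%nat -> 1 <= G n.
Hypothesis G_lim : is_lim_seq G 1.

Definition twos_genfun (n : nat) : R := Series (fun m => zs_twos m n * y ^ m).

Lemma is_series_G_telescoping (n : nat) : (1 <= n)%nat ->
  is_series (fun i => y * (inv_sq (n + i) * G (n + i))) (G n - 1).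
Proof.
  intro Hn.
  assert (Hlim : is_lim_seq (fun i => G (n + i)) 1).
  { apply (is_lim_seq_ext (fun i => G (i + n))); [intro i; f_equal; lia|].
    now apply (is_lim_seq_incr_n G n). }
  generalize (is_series_telescoping _ _ Hlim). rewrite Nat.add_0_r.
  apply is_series_ext. intro i.
  replace (n + S i)%nat with (S (n + i)) by lia. rewrite G_S by lia. simpl. ring.
Qed.

Lemma sum_twos_genfun_le (M n : nat) : (1 <= n)%nat ->
  sum_f_R0 (fun m => zs_twos m n * y ^ m) M <= G n.
Proof.
  revert n; induction M as [|M IH]; intros n Hn.
  - simpl. rewrite zs_twos_0. specialize (G_ge1 n Hn). lra.
  - rewrite sum_zs_twos_S.
    assert (Hrows := is_series_sum_f_R0_rows
      (fun m i => inv_sq (n + i) * zs_twos m (n + i) * y ^ m) (fun m => zs_twos (S m) n * y ^ m) M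
      (fun m => is_series_scal_r _ _ _ (is_series_zs_twos_S m n Hn))).
    apply (is_series_scal_l y) in Hrows.
    enough (y * sum_f_R0 (fun m => zs_twos (S m) n * y ^ m) M <= G n - 1) by lra.
    refine (is_series_le _ _ _ _ _ Hrows (is_series_G_telescoping n Hn)).
    intro i. change (scal y ?u) with (y * u). apply Rmult_le_compat_l; auto.
    rewrite (sum_eq _ (fun m => zs_twos m (n + i) * y ^ m * inv_sq (n + i))) by (intros; ring).
    rewrite <- scal_sum. apply Rmult_le_compat_l; [left; apply inv_sq_gt0; lia|].
    apply IH; lia.
Qed.

Lemma is_series_twos_genfun (n : nat) : (1 <= n)%nat ->
  is_series (fun m => zs_twos m n * y ^ m) (twos_genfun n) /\ 1 <= twos_genfun n <= G n.
Proof.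
  intro Hn.
  assert (Hpos : forall m, 0 <= zs_twos m n * y ^ m).
  { intro m. apply Rmult_le_pos; [now apply zs_twos_ge0 | now apply pow_le]. }
  destruct (is_series_bounded_ge0 _ (G n) Hpos (fun M => sum_twos_genfun_le M n Hn))
    as [l [Hl HlG]].
  unfold twos_genfun. rewrite (is_series_unique _ _ Hl). repeat split; auto.
  generalize (is_series_term_le _ _ Hpos Hl 0%nat). rewrite zs_twos_0. simpl; lra.
Qed.

Lemma twos_genfun_S (n : nat) : (1 <= n)%nat ->
  twos_genfun (S n) = twos_genfun n * (1 - y * inv_sq n).
Proof.
  intro Hn.
  destruct (is_series_twos_genfun n Hn) as [Hser _].
  destruct (is_series_twos_genfun (S n) ltac:(lia)) as [HserS _].
  assert (Htail := is_series_shift_1 _ _ Hser).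
  assert (Hsplit := is_series_plus _ _ _ _ (is_series_scal_l (y * inv_sq n) _ _ Hser)
                                           (is_series_shift_1 _ _ HserS)).
  apply (is_series_ext _ (fun m => zs_twos (S m) n * y ^ S m)) in Hsplit.
  2:{ intro m. rewrite (zs_twos_S_shift m n Hn). change (scal ?a ?b) with (a * b).
      change (plus ?a ?b) with (a + b). simpl; ring. }
  assert (E : twos_genfun n - zs_twos 0 n * y ^ 0 =
              y * inv_sq n * twos_genfun n + (twos_genfun (S n) - zs_twos 0 (S n) * y ^ 0)).
  { rewrite <- (is_series_unique _ _ Htail). now apply is_series_unique. }
  rewrite !zs_twos_0 in E. simpl in E. lra.
Qed.

Lemma twos_genfun_eq (n : nat) : (1 <= n)%nat -> twos_genfun n = G n.
Proof.
  intro Hn.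
  assert (HG1 := G_ge1 1 (le_n 1)).
  set (rho := twos_genfun 1 / G 1%nat).
  assert (Hrho : forall k, (1 <= k)%nat -> twos_genfun k = rho * G k).
  { intros k Hk. induction Hk as [|k Hk IH].
    - unfold rho. field. lra.
    - rewrite twos_genfun_S, G_S, IH by auto. ring. }
  assert (rho <= 1).
  { destruct (is_series_twos_genfun 1 (le_n 1)) as [_ [_ Hle]]. unfold rho.
    apply Rmult_le_reg_r with (G 1%nat); [lra|].
    unfold Rdiv; rewrite Rmult_assoc, Rinv_l by lra. lra. }
  assert (1 <= rho).
  { assert (Hlim : is_lim_seq (fun n => rho * G (S n)) (rho * 1)).
    { apply (is_lim_seq_scal_l _ rho 1). now apply (is_lim_seq_incr_1 G). }
    rewrite <- (Rmult_1_r rho).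
    refine (is_lim_seq_le (fun _ => 1) _ 1 (rho * 1) _ (is_lim_seq_const 1) Hlim).
    intro k. rewrite <- Hrho by lia. apply (is_series_twos_genfun (S k)); lia. }
  rewrite Hrho by auto. replace rho with 1 by lra. ring.
Qed.

Lemma is_series_zs_twos_genfun (n : nat) : (1 <= n)%nat ->
  is_series (fun m => zs_twos m n * y ^ m) (G n).
Proof. intro Hn. rewrite <- twos_genfun_eq by auto. now apply is_series_twos_genfun. Qed.

End TwosGeneratingFunction.

(** * Improper integrals over (0, +oo) *)

Lemma filter_prod_between_pos (P : R -> Prop) : (forall t, 0 < t -> P t) ->
  filter_prod (at_right 0) (Rbar_locally p_infty)
    (fun ab => forall t, Rmin (fst ab) (snd ab) <= t <= Rmax (fst ab) (snd ab) -> P t).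
Proof.
  intro HP. apply Filter_prod with (fun a => 0 < a) (fun b => 0 < b).
  - exists (mkposreal 1 Rlt_0_1). now intros.
  - now exists 0.
  - intros a b Ha Hb t Ht. apply HP. simpl in Ht.
    assert (0 < Rmin a b) by now apply Rmin_glb_lt. lra.
Qed.

Lemma is_RInt_gen_ext_pos (f g : R -> R) (l : R) : (forall t, 0 < t -> f t = g t) ->
  is_RInt_gen f (at_right 0) (Rbar_locally p_infty) l ->
  is_RInt_gen g (at_right 0) (Rbar_locally p_infty) l.
Proof.
  intro Hfg. apply is_RInt_gen_ext.
  generalize (filter_prod_between_pos _ Hfg). apply filter_imp.
  intros ab Hab t Ht. apply Hab. lra.
Qed.

Lemma is_RInt_gen_pos_unique (f : R -> R) (l1 l2 : R) :
  is_RInt_gen f (at_right 0) (Rbar_locally p_infty) l1 ->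
  is_RInt_gen f (at_right 0) (Rbar_locally p_infty) l2 -> l1 = l2.
Proof.
  intros H1 H2.
  apply (@is_RInt_gen_unique R_CompleteNormedModule (at_right 0) (Rbar_locally p_infty) _ _)
    in H1, H2.
  now rewrite <- H1, <- H2.
Qed.

Lemma is_RInt_gen_pos_lincomb (f g : R -> R) (lf lg a b : R) :
  is_RInt_gen f (at_right 0) (Rbar_locally p_infty) lf ->
  is_RInt_gen g (at_right 0) (Rbar_locally p_infty) lg ->
  is_RInt_gen (fun t => a * f t + b * g t) (at_right 0) (Rbar_locally p_infty) (a * lf + b * lg).
Proof.
  intros Hf Hg.
  apply (@is_RInt_gen_scal R_NormedModule (at_right 0) (Rbar_locally p_infty) _ _ f a) in Hf.
  apply (@is_RInt_gen_scal R_NormedModule (at_right 0) (Rbar_locally p_infty) _ _ g b) in Hg.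
  exact (@is_RInt_gen_plus R_NormedModule (at_right 0) (Rbar_locally p_infty) _ _ _ _ _ _ Hf Hg).
Qed.

Lemma is_RInt_gen_pos_le (f g : R -> R) (lf lg : R) : (forall t, 0 < t -> 0 <= f t <= g t) ->
  is_RInt_gen f (at_right 0) (Rbar_locally p_infty) lf ->
  is_RInt_gen g (at_right 0) (Rbar_locally p_infty) lg -> lf <= lg.
Proof.
  intros Hfg Hf Hg. apply Rle_trans with (norm lf); [apply Rle_abs|].
  apply (@RInt_gen_norm R_CompleteNormedModule (at_right 0) (Rbar_locally p_infty) _ _ f g lf lg);
    auto.
  - apply Filter_prod with (fun a => a < 1) (fun b => 1 < b).
    + exists (mkposreal 1 Rlt_0_1). intros t Ht _. change (Rabs (t - 0) < 1) in Ht.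
      apply Rabs_lt_between in Ht. lra.
    + now exists 1.
    + intros; simpl; lra.
  - assert (Hnorm : forall t, 0 < t -> norm (f t) <= g t).
    { intros t Ht. destruct (Hfg t Ht). change (Rabs (f t) <= g t). rewrite Rabs_pos_eq; lra. }
    generalize (filter_prod_between_pos _ Hnorm). apply filter_imp.
    intros [a b] Hab t Ht. apply Hab. simpl in *.
    generalize (Rmin_l a b) (Rmax_r a b). lra.
Qed.

Lemma is_RInt_gen_pos_derive (F f : R -> R) (la lb : R) :
  (forall t, 0 < t -> is_derive F t (f t)) -> (forall t, 0 < t -> continuous f t) ->
  filterlim F (at_right 0) (locally la) -> filterlim F (Rbar_locally p_infty) (locally lb) ->
  is_RInt_gen f (at_right 0) (Rbar_locally p_infty) (lb - la).
Proof.
  intros HF Hf Hla Hlb.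
  assert (HD : forall t, 0 < t -> Derive F t = f t) by (intros; now apply is_derive_unique, HF).
  apply (is_RInt_gen_ext_pos (Derive F)); auto.
  apply is_RInt_gen_Derive; auto; apply filter_prod_between_pos; intros t Ht.
  - eexists; now apply HF.
  - apply (continuous_ext_loc _ f); [|now apply Hf].
    exists (mkposreal t Ht). intros u Hu. change (Rabs (u - t) < t) in Hu.
    apply Rabs_lt_between in Hu. symmetry; apply HD; lra.
Qed.

Lemma filterlim_Rpower_at_right0 (s : R) : 0 < s ->
  filterlim (fun t => Rpower t s) (at_right 0) (locally 0).
Proof.
  intro Hs. unfold Rpower.
  apply (filterlim_comp _ _ _ (fun t => s * ln t) exp _ (Rbar_locally m_infty));
    [|exact is_lim_exp_m].
  apply (filterlim_comp _ _ _ ln (Rmult s) _ (Rbar_locally m_infty)); [exact is_lim_ln_0|].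
  replace m_infty with (Rbar_mult s m_infty) at 2.
  2:{ simpl. destruct (Rle_dec 0 s) as [H|H]; [|lra].
      destruct (Rle_lt_or_eq_dec 0 s H); [reflexivity | lra]. }
  apply filterlim_Rbar_mult_l.
Qed.

Lemma filterlim_div_p_infty (C : R) :
  filterlim (fun t => C / t) (Rbar_locally p_infty) (locally 0).
Proof.
  change (is_lim (fun t => C * / t) p_infty 0).
  replace (Finite 0) with (Rbar_mult C (Rbar_inv p_infty)) by (simpl; f_equal; ring).
  apply (is_lim_scal_l (fun t => / t)). apply is_lim_inv; [apply is_lim_id | discriminate].
Qed.

Section PositiveIntegrand.

Variable f : R -> R.
Hypothesis f_cont : forall t, 0 < t -> continuous f t.
Hypothesis f_ge0 : forall t, 0 < t -> 0 <= f t.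

Lemma ex_RInt_pos (a b : R) : 0 < a -> 0 < b -> ex_RInt f a b.
Proof.
  intros Ha Hb. apply (@ex_RInt_continuous R_CompleteNormedModule). intros t Ht. apply f_cont.
  assert (0 < Rmin a b) by now apply Rmin_glb_lt. lra.
Qed.

Lemma RInt_pos_ge0 (a b : R) : 0 < a <= b -> 0 <= RInt f a b.
Proof.
  intro Hab. apply RInt_ge_0; [lra | apply ex_RInt_pos; lra |].
  intros; apply f_ge0; lra.
Qed.

Lemma RInt_from1_sub (a b : R) : 0 < a -> 0 < b -> RInt f 1 b - RInt f 1 a = RInt f a b.
Proof.
  intros Ha Hb. rewrite <- (RInt_Chasles f 1 a b) by (apply ex_RInt_pos; lra).
  change (RInt f 1 a + RInt f a b - RInt f 1 a = RInt f a b). ring.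
Qed.

Lemma Rabs_RInt_from1_sub (a b : R) : 0 < a -> 0 < b ->
  Rabs (RInt f 1 b - RInt f 1 a) = RInt f (Rmin a b) (Rmax a b).
Proof.
  intros Ha Hb. rewrite RInt_from1_sub by auto.
  destruct (Rle_or_lt a b) as [Hab|Hab].
  - rewrite Rmin_left, Rmax_right by lra. apply Rabs_pos_eq, RInt_pos_ge0; lra.
  - rewrite Rmin_right, Rmax_left by lra. rewrite <- opp_RInt_swap by (apply ex_RInt_pos; lra).
    change (Rabs (- RInt f b a) = RInt f b a).
    rewrite Rabs_Ropp, Rabs_pos_eq; [reflexivity|]. apply RInt_pos_ge0; lra.
Qed.

Lemma is_derive_RInt_from1 (t : R) : 0 < t -> is_derive (fun u => RInt f 1 u) t (f t).
Proof.
  intro Ht. apply (is_derive_RInt f _ 1); [|now apply f_cont].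
  exists (mkposreal t Ht). intros u Hu. change (Rabs (u - t) < t) in Hu.
  apply Rabs_lt_between in Hu. apply (@RInt_correct R_CompleteNormedModule), ex_RInt_pos; lra.
Qed.

Lemma ex_lim_RInt_from1_at_right0 (g : R -> R) :
  (forall u v, 0 < u <= v -> RInt f u v <= g v) -> filterlim g (at_right 0) (locally 0) ->
  exists l, filterlim (fun v => RInt f 1 v) (at_right 0) (locally l).
Proof.
  intros Hfg Hg. apply (filterlim_locally_cauchy (F := at_right 0)). intro eps.
  exists (fun v => 0 < v /\ Rabs (g v) < eps). split.
  - apply filter_and; [now exists (mkposreal 1 Rlt_0_1)|].
    apply (Hg (fun y => Rabs y < eps)). exists eps. intros y Hy.
    change (Rabs (y - 0) < eps) in Hy. now rewrite Rminus_0_r in Hy.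
  - intros u v [Hu Hgu] [Hv Hgv]. change (Rabs (RInt f 1 v - RInt f 1 u) < eps).
    rewrite Rabs_RInt_from1_sub by auto.
    eapply Rle_lt_trans; [apply Hfg; split; [now apply Rmin_glb_lt | apply Rmin_Rmax]|].
    eapply Rle_lt_trans; [apply Rle_abs|]. now unfold Rmax; destruct Rle_dec.
Qed.

Lemma ex_lim_RInt_from1_p_infty (g : R -> R) :
  (forall u v, 0 < u <= v -> RInt f u v <= g u) -> filterlim g (Rbar_locally p_infty) (locally 0) ->
  exists l, filterlim (fun v => RInt f 1 v) (Rbar_locally p_infty) (locally l).
Proof.
  intros Hfg Hg. apply (filterlim_locally_cauchy (F := Rbar_locally p_infty)). intro eps.
  exists (fun v => 0 < v /\ Rabs (g v) < eps). split.
  - apply filter_and; [now exists 0|].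
    apply (Hg (fun y => Rabs y < eps)). exists eps. intros y Hy.
    change (Rabs (y - 0) < eps) in Hy. now rewrite Rminus_0_r in Hy.
  - intros u v [Hu Hgu] [Hv Hgv]. change (Rabs (RInt f 1 v - RInt f 1 u) < eps).
    rewrite Rabs_RInt_from1_sub by auto.
    eapply Rle_lt_trans; [apply Hfg; split; [now apply Rmin_glb_lt | apply Rmin_Rmax]|].
    eapply Rle_lt_trans; [apply Rle_abs|]. now unfold Rmin; destruct Rle_dec.
Qed.

Lemma is_RInt_gen_pos_of_bounds (g0 ginf : R -> R) :
  (forall u v, 0 < u <= v -> RInt f u v <= g0 v) -> filterlim g0 (at_right 0) (locally 0) ->
  (forall u v, 0 < u <= v -> RInt f u v <= ginf u) ->
  filterlim ginf (Rbar_locally p_infty) (locally 0) ->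
  exists l, is_RInt_gen f (at_right 0) (Rbar_locally p_infty) l /\
            forall a b, 0 < a <= b -> RInt f a b <= l.
Proof.
  intros H0 Hg0 Hinf Hginf.
  destruct (ex_lim_RInt_from1_at_right0 g0 H0 Hg0) as [la Hla].
  destruct (ex_lim_RInt_from1_p_infty ginf Hinf Hginf) as [lb Hlb].
  exists (lb - la). split.
  { apply (is_RInt_gen_pos_derive (fun u => RInt f 1 u)); auto. apply is_derive_RInt_from1. }
  intros a b Hab. rewrite <- RInt_from1_sub by lra.
  assert (la <= RInt f 1 a).
  { assert (Hle := filterlim_le (F := at_right 0)
                     (fun v => RInt f 1 v) (fun _ => RInt f 1 a) la (RInt f 1 a)).
    apply Hle; auto; [|apply filterlim_const].
    exists (mkposreal a (proj1 Hab)). intros v Hv Hv0. change (Rabs (v - 0) < a) in Hv.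
    apply Rabs_lt_between in Hv.
    generalize (RInt_from1_sub v a Hv0 ltac:(lra)) (RInt_pos_ge0 v a ltac:(lra)). lra. }
  assert (RInt f 1 b <= lb).
  { assert (Hle := filterlim_le (F := Rbar_locally p_infty)
                     (fun _ => RInt f 1 b) (fun v => RInt f 1 v) (RInt f 1 b) lb).
    apply Hle; auto; [|apply filterlim_const].
    exists b. intros v Hv.
    generalize (RInt_from1_sub b v ltac:(lra) ltac:(lra)) (RInt_pos_ge0 b v ltac:(lra)). lra. }
  lra.
Qed.

End PositiveIntegrand.

Lemma RInt_le_antiderivative (f g G : R -> R) (u v : R) : u <= v ->
  (forall t, u <= t <= v -> is_derive G t (g t)) -> (forall t, u <= t <= v -> continuous g t) ->
  ex_RInt f u v -> (forall t, u < t < v -> f t <= g t) ->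
  RInt f u v <= G v - G u.
Proof.
  intros Huv HG Hg Hf Hfg.
  assert (HI : is_RInt g u v (G v - G u)).
  { apply (@is_RInt_derive R_CompleteNormedModule); rewrite Rmin_left, Rmax_right by lra; auto. }
  rewrite <- (is_RInt_unique _ _ _ _ HI).
  apply RInt_le; auto. eexists; exact HI.
Qed.

Lemma exp_le_compat (x y : R) : x <= y -> exp x <= exp y.
Proof. intros [Hxy|<-]; [left; now apply exp_increasing | apply Rle_refl]. Qed.

Lemma ln_le_sub1 (u : R) : 0 < u -> ln u <= u - 1.
Proof. intro Hu. generalize (exp_ineq1_le (ln u)). rewrite exp_ln by lra. lra. Qed.

(** * The Gamma function *)

Definition gamma_integrand (s t : R) : R := Rpower t (s - 1) * exp (- t).

Lemma gamma_integrand_exp (s t : R) : gamma_integrand s t = exp ((s - 1) * ln t - t).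
Proof. unfold gamma_integrand, Rpower. rewrite <- exp_plus. f_equal; ring. Qed.

Lemma gamma_integrand_gt0 (s t : R) : 0 < gamma_integrand s t.
Proof. rewrite gamma_integrand_exp. apply exp_pos. Qed.

Lemma continuous_gamma_integrand (s t : R) : 0 < t -> continuous (gamma_integrand s) t.
Proof.
  intro Ht. apply (@ex_derive_continuous R_AbsRing R_NormedModule).
  apply (ex_derive_ext (fun t => exp ((s - 1) * ln t - t))).
  - intro; symmetry; apply gamma_integrand_exp.
  - auto_derive. lra.
Qed.

Lemma gamma_integrand_le_Rpower (s t : R) : 0 < t -> gamma_integrand s t <= Rpower t (s - 1).
Proof.
  intro Ht. unfold gamma_integrand.
  assert (exp (- t) <= 1) by (rewrite <- exp_0; left; apply exp_increasing; lra).
  assert (0 < Rpower t (s - 1)) by apply exp_pos. nra.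
Qed.

(* [((s + 1) / e) ^ (s + 1)], the maximum of [t ^ (s + 1) * exp (- t)], attained at [t = s + 1]. *)
Definition gamma_tail_const (s : R) : R := exp ((s + 1) * (ln (s + 1) - 1)).

Lemma gamma_integrand_le_tail (s t : R) : 0 < s -> 0 < t ->
  gamma_integrand s t <= gamma_tail_const s / t ^ 2.
Proof.
  intros Hs Ht. rewrite gamma_integrand_exp. unfold gamma_tail_const.
  replace (t ^ 2) with (exp (2 * ln t)) by (rewrite <- Rpower_pow by lra; reflexivity).
  unfold Rdiv. rewrite <- exp_Ropp, <- exp_plus. apply exp_le_compat.
  assert (Hln := ln_le_sub1 (t / (s + 1)) ltac:(apply Rdiv_lt_0_compat; lra)).
  rewrite ln_div in Hln by lra.
  assert (E : (s + 1) * (t / (s + 1) - 1) = t - (s + 1)) by (field; lra).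
  nra.
Qed.

Lemma RInt_gamma_integrand_le_Rpower (s u v : R) : 0 < s -> 0 < u <= v ->
  RInt (gamma_integrand s) u v <= Rpower v s / s.
Proof.
  intros Hs Huv.
  apply Rle_trans with (Rpower v s / s - Rpower u s / s).
  - apply (RInt_le_antiderivative _ (fun t => Rpower t (s - 1)) (fun t => Rpower t s / s)); try lra.
    + intros t Ht. unfold Rpower. auto_derive; [lra|].
      replace ((s - 1) * ln t) with (s * ln t + - ln t) by ring.
      rewrite exp_plus, exp_Ropp, exp_ln by lra. field. lra.
    + intros t Ht. apply (@ex_derive_continuous R_AbsRing R_NormedModule).
      unfold Rpower. auto_derive. lra.
    + apply (ex_RInt_pos _ (continuous_gamma_integrand s)); lra.
    + intros t Ht. apply gamma_integrand_le_Rpower. lra.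
  - assert (0 < Rpower u s / s) by (apply Rdiv_lt_0_compat; [apply exp_pos | lra]). lra.
Qed.

Lemma RInt_gamma_integrand_le_tail (s u v : R) : 0 < s -> 0 < u <= v ->
  RInt (gamma_integrand s) u v <= gamma_tail_const s / u.
Proof.
  intros Hs Huv. assert (HC : 0 < gamma_tail_const s) by apply exp_pos.
  apply Rle_trans with (- gamma_tail_const s / v - - gamma_tail_const s / u).
  - apply (RInt_le_antiderivative _ (fun t => gamma_tail_const s / t ^ 2)
                                    (fun t => - gamma_tail_const s / t)); try lra.
    + intros t Ht. auto_derive; [lra|]. field. lra.
    + intros t Ht. apply (@ex_derive_continuous R_AbsRing R_NormedModule). auto_derive. nra.
    + apply (ex_RInt_pos _ (continuous_gamma_integrand s)); lra.
    + intros t Ht. apply gamma_integrand_le_tail; lra.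
  - assert (0 < gamma_tail_const s / v) by (apply Rdiv_lt_0_compat; lra).
    unfold Rdiv in *. lra.
Qed.

Lemma Gamma_spec (s : R) : 0 < s ->
  is_RInt_gen (gamma_integrand s) (at_right 0) (Rbar_locally p_infty) (Gamma s) /\
  forall a b, 0 < a <= b -> RInt (gamma_integrand s) a b <= Gamma s.
Proof.
  intro Hs.
  destruct (is_RInt_gen_pos_of_bounds (gamma_integrand s) (continuous_gamma_integrand s)
              (fun t _ => Rlt_le _ _ (gamma_integrand_gt0 s t))
              (fun v => Rpower v s / s) (fun u => gamma_tail_const s / u))
    as [l [Hl Hle]].
  - intros u v Huv. now apply RInt_gamma_integrand_le_Rpower.
  - apply (filterlim_comp _ _ _ (fun v => Rpower v s) (fun y => y / s) _ (locally 0));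
      [now apply filterlim_Rpower_at_right0|].
    assert (Hc : continuous (fun y => y / s) 0).
    { apply (@ex_derive_continuous R_AbsRing R_NormedModule). auto_derive. lra. }
    unfold continuous in Hc. now rewrite Rdiv_0_l in Hc.
  - intros u v Huv. now apply RInt_gamma_integrand_le_tail.
  - apply filterlim_div_p_infty.
  - replace (Gamma s) with l; [split; auto|].
    symmetry.
    exact (@is_RInt_gen_unique R_CompleteNormedModule (at_right 0) (Rbar_locally p_infty)
             _ _ _ _ Hl).
Qed.

Lemma is_RInt_gen_Gamma (s : R) : 0 < s ->
  is_RInt_gen (gamma_integrand s) (at_right 0) (Rbar_locally p_infty) (Gamma s).
Proof. intro Hs. exact (proj1 (Gamma_spec s Hs)). Qed.

Lemma Gamma_gt0 (s : R) : 0 < s -> 0 < Gamma s.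
Proof.
  intro Hs. apply Rlt_le_trans with (RInt (gamma_integrand s) 1 2).
  - apply RInt_gt_0; [lra | intros; apply gamma_integrand_gt0 |].
    intros t Ht. apply continuous_gamma_integrand. lra.
  - apply (Gamma_spec s Hs). lra.
Qed.

Lemma filterlim_gamma_integrand_at_right0 (s : R) : 1 < s ->
  filterlim (gamma_integrand s) (at_right 0) (locally 0).
Proof.
  intro Hs.
  apply (filterlim_le_le (fun _ => 0) _ (fun t => Rpower t (s - 1)) 0);
    [| apply filterlim_const | apply filterlim_Rpower_at_right0; lra].
  exists (mkposreal 1 Rlt_0_1). intros t _ Ht.
  split; [left; apply gamma_integrand_gt0 | now apply gamma_integrand_le_Rpower].
Qed.

Lemma filterlim_gamma_integrand_p_infty (s : R) : 0 < s ->
  filterlim (gamma_integrand s) (Rbar_locally p_infty) (locally 0).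
Proof.
  intro Hs.
  apply (filterlim_le_le (fun _ => 0) _ (fun t => gamma_tail_const s / t) 0);
    [| apply filterlim_const | apply filterlim_div_p_infty].
  exists 1. intros t Ht. split; [left; apply gamma_integrand_gt0|].
  apply Rle_trans with (gamma_tail_const s / t ^ 2); [apply gamma_integrand_le_tail; lra|].
  apply Rmult_le_compat_l; [left; apply exp_pos|].
  apply Rinv_le_contravar; [lra|]. simpl; nra.
Qed.

Lemma is_derive_gamma_integrand_succ (s t : R) : 0 < t ->
  is_derive (gamma_integrand (s + 1)) t (s * gamma_integrand s t + -1 * gamma_integrand (s + 1) t).
Proof.
  intro Ht. apply (is_derive_ext (fun t => exp (s * ln t - t))).
  { intro u. rewrite gamma_integrand_exp. f_equal. ring. }
  auto_derive; [lra|]. rewrite !gamma_integrand_exp.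
  replace ((s - 1) * ln t - t) with ((s * ln t - t) + - ln t) by ring.
  replace ((s + 1 - 1) * ln t - t) with (s * ln t - t) by ring.
  rewrite (exp_plus _ (- ln t)), exp_Ropp, exp_ln by lra.
  replace (s * ln t + - t) with (s * ln t - t) by ring.
  field. lra.
Qed.

Lemma Gamma_succ (s : R) : 0 < s -> Gamma (s + 1) = s * Gamma s.
Proof.
  intro Hs.
  assert (Hparts := is_RInt_gen_pos_derive (gamma_integrand (s + 1)) _ 0 0
                      (is_derive_gamma_integrand_succ s)).
  assert (Hcomb := is_RInt_gen_pos_lincomb _ _ _ _ s (-1) (is_RInt_gen_Gamma s Hs)
                     (is_RInt_gen_Gamma (s + 1) ltac:(lra))).
  enough (s * Gamma s + -1 * Gamma (s + 1) = 0 - 0) by lra.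
  apply (is_RInt_gen_pos_unique _ _ _ Hcomb), Hparts.
  - intros t Ht.
    apply (continuous_plus (fun u => s * gamma_integrand s u)
                           (fun u => -1 * gamma_integrand (s + 1) u));
      apply (continuous_scal_r _ (gamma_integrand _)); now apply continuous_gamma_integrand.
  - apply filterlim_gamma_integrand_at_right0. lra.
  - apply filterlim_gamma_integrand_p_infty. lra.
Qed.

Lemma Rpower_gt0 (x y : R) : 0 < Rpower x y.
Proof. apply exp_pos. Qed.

(* Tangent line [1 + z <= exp z] at the weighted mean of the logarithms. *)
Lemma Rpower_weighted_am_gm (u v a : R) : 0 < u -> 0 < v -> 0 <= a <= 1 ->
  Rpower u a * Rpower v (1 - a) <= a * u + (1 - a) * v.
Proof.
  intros Hu Hv Ha. unfold Rpower. rewrite <- exp_plus.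
  set (m := a * ln u + (1 - a) * ln v).
  assert (Htangent : forall w, 0 < w -> exp m * (1 + (ln w - m)) <= w).
  { intros w Hw. rewrite <- (exp_ln w) at 2 by lra.
    replace (ln w) with (m + (ln w - m)) at 2 by ring. rewrite exp_plus.
    apply Rmult_le_compat_l; [left; apply exp_pos | apply exp_ineq1_le]. }
  assert (Hu' := Htangent u Hu). assert (Hv' := Htangent v Hv).
  assert (E : a * (1 + (ln u - m)) + (1 - a) * (1 + (ln v - m)) = 1) by (unfold m; ring).
  replace (exp m) with (exp m * (a * (1 + (ln u - m)) + (1 - a) * (1 + (ln v - m))))
    by (rewrite E; ring).
  assert (a * (exp m * (1 + (ln u - m))) <= a * u) by (apply Rmult_le_compat_l; lra).
  assert ((1 - a) * (exp m * (1 + (ln v - m))) <= (1 - a) * v) by (apply Rmult_le_compat_l; lra).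
  lra.
Qed.

(* Hoelder's inequality: weighted AM-GM applied pointwise to the integrands divided by their
   integrals. *)
Lemma Gamma_log_convex (s1 s2 a : R) : 0 < s1 -> 0 < s2 -> 0 <= a <= 1 ->
  Gamma (a * s1 + (1 - a) * s2) <= Rpower (Gamma s1) a * Rpower (Gamma s2) (1 - a).
Proof.
  intros H1 H2 Ha.
  assert (Hs : 0 < a * s1 + (1 - a) * s2) by nra.
  assert (G1 := Gamma_gt0 s1 H1). assert (G2 := Gamma_gt0 s2 H2).
  set (K := Rpower (Gamma s1) a * Rpower (Gamma s2) (1 - a)).
  assert (HK : 0 < K) by (apply Rmult_lt_0_compat; apply Rpower_gt0).
  replace K with (K * a / Gamma s1 * Gamma s1 + K * (1 - a) / Gamma s2 * Gamma s2) by (field; lra).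
  refine (is_RInt_gen_pos_le _ _ _ _ _ (is_RInt_gen_Gamma _ Hs)
            (is_RInt_gen_pos_lincomb _ _ _ _ _ _
               (is_RInt_gen_Gamma s1 H1) (is_RInt_gen_Gamma s2 H2))).
  intros t Ht. split; [left; apply gamma_integrand_gt0|].
  assert (Hmix : gamma_integrand (a * s1 + (1 - a) * s2) t =
    K * (Rpower (gamma_integrand s1 t / Gamma s1) a *
         Rpower (gamma_integrand s2 t / Gamma s2) (1 - a))).
  { unfold K, Rpower. rewrite !ln_div by (try apply gamma_integrand_gt0; lra).
    rewrite !gamma_integrand_exp, !ln_exp, <- !exp_plus. f_equal. ring. }
  rewrite Hmix.
  set (p := gamma_integrand s1 t / Gamma s1). set (q := gamma_integrand s2 t / Gamma s2).
  assert (Hp : 0 < p) by (apply Rdiv_lt_0_compat; [apply gamma_integrand_gt0 | lra]).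
  assert (Hq : 0 < q) by (apply Rdiv_lt_0_compat; [apply gamma_integrand_gt0 | lra]).
  apply Rle_trans with (K * (a * p + (1 - a) * q)).
  - apply Rmult_le_compat_l; [lra | now apply Rpower_weighted_am_gm].
  - right. unfold p, q. field. lra.
Qed.

Lemma Gamma_shift_up_le (k b : R) : 0 < k -> 0 <= b <= 1 -> Gamma (k + b) <= Gamma k * Rpower k b.
Proof.
  intros Hk Hb. assert (HG := Gamma_gt0 k Hk).
  generalize (Gamma_log_convex k (k + 1) (1 - b) Hk ltac:(lra) ltac:(lra)).
  replace ((1 - b) * k + (1 - (1 - b)) * (k + 1)) with (k + b) by ring.
  rewrite Gamma_succ, <- Rpower_mult_distr, Rmult_comm by lra.
  replace (1 - (1 - b)) with b by ring.
  rewrite Rmult_assoc, <- Rpower_plus, Rplus_comm, Rplus_minus, Rpower_1 by lra. lra.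
Qed.

Lemma Gamma_shift_down_le (k b : R) : 1 < k -> 0 <= b <= 1 ->
  Gamma (k - b) * Rpower (k - 1) b <= Gamma k.
Proof.
  intros Hk Hb. assert (HG := Gamma_gt0 (k - 1) ltac:(lra)).
  generalize (Gamma_log_convex (k - 1) k b ltac:(lra) ltac:(lra) Hb).
  replace (b * (k - 1) + (1 - b) * k) with (k - b) by ring. intro H.
  apply Rle_trans with (Rpower (k - 1) b * Rpower (Gamma (k - 1)) b * Rpower (Gamma k) (1 - b)).
  - rewrite Rmult_assoc, (Rmult_comm (Rpower (k - 1) b)).
    apply Rmult_le_compat_r; [left; apply Rpower_gt0 | exact H].
  - right. rewrite Rpower_mult_distr by lra.
    replace ((k - 1) * Gamma (k - 1)) with (Gamma k)
      by (rewrite <- Gamma_succ by lra; f_equal; ring).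
    rewrite <- Rpower_plus, Rplus_minus, Rpower_1; [reflexivity|]. apply Gamma_gt0; lra.
Qed.

Lemma Gamma_shift_prod_le (k b : R) : 1 < k -> 0 <= b <= 1 ->
  Gamma (k + b) * Gamma (k - b) <= Gamma k ^ 2 * (k / (k - 1)).
Proof.
  intros Hk Hb.
  assert (Hup := Gamma_shift_up_le k b ltac:(lra) Hb).
  assert (Hdown := Gamma_shift_down_le k b Hk Hb).
  assert (Hpow : Rpower k b <= k / (k - 1) * Rpower (k - 1) b).
  { replace k with (k / (k - 1) * (k - 1)) at 1 by (field; lra).
    rewrite <- Rpower_mult_distr by (try apply Rdiv_lt_0_compat; lra).
    apply Rmult_le_compat_r; [left; apply Rpower_gt0|].
    rewrite <- (Rpower_1 (k / (k - 1))) at 2 by (apply Rdiv_lt_0_compat; lra).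
    apply Rle_Rpower; [|lra].
    apply Rmult_le_reg_r with (k - 1); [lra|]. unfold Rdiv. rewrite Rmult_assoc, Rinv_l; lra. }
  assert (Gk := Gamma_gt0 k ltac:(lra)). assert (Gp := Gamma_gt0 (k + b) ltac:(lra)).
  assert (Gm := Gamma_gt0 (k - b) ltac:(lra)).
  assert (Hp := Rpower_gt0 (k - 1) b).
  apply Rmult_le_reg_r with (Rpower (k - 1) b); [exact Hp|].
  apply Rle_trans with (Gamma k * Rpower k b * Gamma k).
  { rewrite Rmult_assoc.
    apply Rmult_le_compat; [lra | apply Rmult_le_pos; lra | exact Hup | exact Hdown]. }
  replace (Gamma k * Rpower k b * Gamma k) with (Gamma k ^ 2 * Rpower k b) by ring.
  rewrite Rmult_assoc. apply Rmult_le_compat_l; [apply pow_le; lra | exact Hpow].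
Qed.

(** * The ratio of Gamma values *)

Definition gamma_ratio (x k : R) : R := Gamma (k + x) * Gamma (k - x) / Gamma k ^ 2.

Lemma gamma_ratio_succ (x k : R) : Rabs x < k ->
  gamma_ratio x (k + 1) = gamma_ratio x k * (1 - x ^ 2 / k ^ 2).
Proof.
  intro Hx. apply Rabs_lt_between in Hx. unfold gamma_ratio.
  replace (k + 1 + x) with ((k + x) + 1) by ring. replace (k + 1 - x) with ((k - x) + 1) by ring.
  rewrite !Gamma_succ by lra.
  assert (0 < Gamma k) by (apply Gamma_gt0; lra).
  field. lra.
Qed.

Lemma gamma_ratio_ge1 (x k : R) : Rabs x < k -> 1 <= gamma_ratio x k.
Proof.
  intro Hx. apply Rabs_lt_between in Hx.
  assert (Gp := Gamma_gt0 (k + x) ltac:(lra)). assert (Gm := Gamma_gt0 (k - x) ltac:(lra)).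
  assert (Gk := Gamma_gt0 k ltac:(lra)).
  generalize (Gamma_log_convex (k + x) (k - x) (/ 2) ltac:(lra) ltac:(lra) ltac:(lra)).
  replace (/ 2 * (k + x) + (1 - / 2) * (k - x)) with k by field.
  replace (1 - / 2) with (/ 2) by field.
  intro H.
  assert (Hsq : Gamma k ^ 2 <= Gamma (k + x) * Gamma (k - x)).
  { apply Rle_trans with ((Rpower (Gamma (k + x)) (/ 2) * Rpower (Gamma (k - x)) (/ 2)) ^ 2).
    - apply pow_incr; lra.
    - rewrite !Rpower_sqrt by lra. rewrite Rpow_mult_distr, !pow2_sqrt by lra. lra. }
  unfold gamma_ratio. apply Rmult_le_reg_r with (Gamma k ^ 2); [now apply pow_lt|].
  unfold Rdiv. rewrite Rmult_assoc, Rinv_l by (apply pow_nonzero; lra). lra.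
Qed.

Lemma gamma_ratio_opp (x k : R) : gamma_ratio (- x) k = gamma_ratio x k.
Proof. unfold gamma_ratio. unfold Rminus. rewrite Ropp_involutive. f_equal. ring. Qed.

Lemma gamma_ratio_le (x k : R) : Rabs x <= 1 -> 1 < k -> gamma_ratio x k <= k / (k - 1).
Proof.
  intros Hx Hk.
  assert (E : gamma_ratio x k = gamma_ratio (Rabs x) k).
  { unfold Rabs. destruct Rcase_abs; [now rewrite gamma_ratio_opp | reflexivity]. }
  rewrite E. assert (Gk := Gamma_gt0 k ltac:(lra)).
  unfold gamma_ratio. apply Rmult_le_reg_r with (Gamma k ^ 2); [now apply pow_lt|].
  unfold Rdiv at 1. rewrite Rmult_assoc, Rinv_l by (apply pow_nonzero; lra).
  rewrite Rmult_1_r, (Rmult_comm (k / (k - 1))).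
  apply Gamma_shift_prod_le; auto. split; [apply Rabs_pos | exact Hx].
Qed.

Lemma is_lim_seq_gamma_ratio (x : R) : Rabs x <= 1 ->
  is_lim_seq (fun n => gamma_ratio x (INR n)) 1.
Proof.
  intro Hx. apply (is_lim_seq_incr_n _ 2).
  apply is_lim_seq_le_le with (fun _ => 1) (fun n => 1 + / INR (1 + n)).
  - intro n.
    assert (Hn : 2 <= INR (n + 2)) by (rewrite plus_INR; simpl; generalize (pos_INR n); lra).
    split; [apply gamma_ratio_ge1; lra|].
    replace (1 + / INR (1 + n)) with (INR (n + 2) / (INR (n + 2) - 1))
      by (rewrite !plus_INR; simpl; field; generalize (pos_INR n); lra).
    apply gamma_ratio_le; lra.
  - apply is_lim_seq_const.
  - replace (Finite 1) with (Finite (1 + 0)) by (f_equal; ring).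
    apply is_lim_seq_plus'; [apply is_lim_seq_const | apply is_lim_seq_inv_INR_shift].
Qed.

Lemma gamma_ratio_INR_succ (x : R) (n : nat) : Rabs x < 1 -> (1 <= n)%nat ->
  gamma_ratio x (INR (S n)) = gamma_ratio x (INR n) * (1 - x ^ 2 * inv_sq n).
Proof.
  intros Hx Hn. assert (H1 := INR_ge1 n Hn).
  rewrite S_INR, gamma_ratio_succ by lra. reflexivity.
Qed.

Lemma gamma_ratio_INR_le_1 (x : R) (n : nat) : Rabs x < 1 -> (1 <= n)%nat ->
  gamma_ratio x (INR n) <= gamma_ratio x 1.
Proof.
  intros Hx Hn. induction Hn as [|n Hn IH]; [apply Rle_refl|].
  rewrite gamma_ratio_INR_succ by auto.
  assert (1 <= gamma_ratio x (INR n)) by (apply gamma_ratio_ge1; generalize (INR_ge1 n Hn); lra).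
  assert (0 <= x ^ 2 * inv_sq n)
    by (apply Rmult_le_pos; [apply pow2_ge_0 | left; now apply inv_sq_gt0]).
  nra.
Qed.

Lemma is_series_zs_twos_gamma_ratio (x : R) (n : nat) : Rabs x < 1 -> (1 <= n)%nat ->
  is_series (fun m => zs_twos m n * (x ^ 2) ^ m) (gamma_ratio x (INR n)).
Proof.
  intros Hx Hn.
  apply (is_series_zs_twos_genfun _ (pow2_ge_0 x) (fun k => gamma_ratio x (INR k))); auto.
  - intros k Hk. now apply gamma_ratio_INR_succ.
  - intros k Hk. apply gamma_ratio_ge1. generalize (INR_ge1 k Hk); lra.
  - apply is_lim_seq_gamma_ratio. lra.
Qed.

Lemma ex_series_weighted_gamma_ratio (r : nat) (x : R) : Rabs x < 1 ->
  ex_series (fun j => / INR (S j) ^ (r + 2) * gamma_ratio x (INR (S j))).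
Proof.
  intro Hx. destruct (is_series_inv_sq 1 (le_n 1)) as [l [Hl _]].
  apply (@ex_series_le R_AbsRing R_CompleteNormedModule _
           (fun j => inv_sq (1 + j) * gamma_ratio x 1)).
  2:{ exists (l * gamma_ratio x 1). exact (is_series_scal_r _ _ _ Hl). }
  intro j. assert (Hw := inv_pow_le_inv_sq r (S j) ltac:(lia)).
  assert (HS := INR_ge1 (S j) ltac:(lia)).
  assert (1 <= gamma_ratio x (INR (S j))) by (apply gamma_ratio_ge1; lra).
  assert (gamma_ratio x (INR (S j)) <= gamma_ratio x 1) by (apply gamma_ratio_INR_le_1; auto; lia).
  change (Rabs (/ INR (S j) ^ (r + 2) * gamma_ratio x (INR (S j)))
          <= inv_sq (S j) * gamma_ratio x 1).
  rewrite Rabs_pos_eq by nra. apply Rmult_le_compat; lra.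
Qed.

Theorem proposition3p1 (r : nat) (x : R) (hx : Rabs x < 1) :
  exists L : R,
    is_series (fun m : nat => zeta_star ((r + 2)%nat :: repeat 2%nat m) * x ^ (2 * m)) L /\
    is_series (fun j : nat =>
                 let k := INR (S j) in
                 / k ^ (r + 2) * (Gamma (k + x) * Gamma (k - x) / (Gamma k) ^ 2)) L.
Proof.
  set (B := fun j => / INR (S j) ^ (r + 2) * gamma_ratio x (INR (S j))).
  exists (Series B). split; [|exact (Series_correct B (ex_series_weighted_gamma_ratio r x hx))].
  apply (is_series_ext
           (fun m => Series (fun j => / INR (S j) ^ (r + 2) * zs_twos m (S j) * (x ^ 2) ^ m))).
  { intro m. rewrite Series_scal_r, pow_mult. reflexivity. }
  apply (is_series_swap_ge0 _ B).
  - intros m j. apply Rmult_le_pos; [apply Rmult_le_pos|].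
    + left; apply (inv_pow_le_inv_sq r (S j)); lia.
    + apply zs_twos_ge0; lia.
    + apply pow_le, pow2_ge_0.
  - intro j. unfold B.
    apply (is_series_ext (fun m => / INR (S j) ^ (r + 2) * (zs_twos m (S j) * (x ^ 2) ^ m))).
    { intro m. simpl; ring. }
    exact (is_series_scal_l _ _ _ (is_series_zs_twos_gamma_ratio x (S j) hx ltac:(lia))).
  - apply Series_correct, ex_series_weighted_gamma_ratio, hx.
Qed.
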